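(* Let $X$ be a weak complicial set, $x\in X_0$ a vertex and $n\ge 1$. Let $\alpha,\alpha',\beta,\beta'$ be $n$-simplices of $X$ whose restrictions to $\partial\Delta[n]$ are constant at $x$, with $\alpha\sim_{\partial\Delta[n]}\alpha'$ and $\beta\sim_{\partial\Delta[n]}\beta'$. Let $\theta:\Delta^n[n+1]\to X$ be any stratified map whose face $d_{n-1}\theta$ is $\alpha$, whose face $d_{n+1}\theta$ is $\beta$, and whose other faces $d_i\theta$, $i\notin\{n-1,n,n+1\}$, are constant at $x$; and let $\theta'$ be any such map for $\alpha',\beta'$. Then $d_n\theta\sim_{\partial\Delta[n]} d_n\theta'$. (Such $\theta,\theta'$ exist, and the class $[d_n\theta]$ in $\tau_n(X,x)$ thus depends only on $[\alpha]$ and $[\beta]$.)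
   Context: A stratified simplicial set is a pair $(X,tX)$ where $X$ is a simplicial set and $tX$ is a set of simplices of $X$ (thin simplices) containing all degenerate simplices and no $0$-simplices; stratified maps are simplicial maps preserving thin simplices. A regular stratified subset $(X,tX)\subset(Y,tY)$ means $X\subset Y$, $tX=X\cap tY$. For $n\ge1$, $\Delta[n]_t$ is $\Delta[n]$ with thin simplices the degenerate ones and $\mathrm{Id}_{[n]}$. For $k\in[n]$, $\Delta^k[n]$ is $\Delta[n]$ with thin simplices the degenerate ones and all $\alpha:[m]\to[n]$ with $\{k-1,k,k+1\}\cap[n]\subset\mathrm{Im}(\alpha)$; $\Lambda^k[n]$ is the regular stratified subset of $\Delta^k[n]$ generated by the faces $\delta_i$, $i\neq k$; $\Delta^k[n]''$ (resp. $\Lambda^k[n]'$) is $\Delta^k[n]$ (resp. $\Lambda^k[n]$) with additionally all its $(n-1)$-simplices thin; $\Delta^k[n]'=\Delta^k[n]\cup\Lambda^k[n]'$. A weak complicial set is a stratified simplicial set with the right lifting property against $\Lambda^k[n]\hookrightarrow\Delta^k[n]$ ($n\ge1$, $k\in[n]$) and $\Delta^k[n]'\hookrightarrow\Delta^k[n]''$ ($n\ge2$, $k\in[n]$). The product $X\circledast Y$ has underlying simplicial set $X\times Y$, with $(x,y)$ thin iff $x$ and $y$ are thin. For stratified maps $f,g:A\to X$ and an inclusion $B\hookrightarrow A$ with $f|_B=g|_B$, $f\sim_B g$ means there is a stratified map $H:A\circledast\Delta[1]_t\to X$ with $H|_{A\times\{0\}}=f$, $H|_{A\times\{1\}}=g$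 and $H|_{B\circledast\Delta[1]_t}=f|_B\circ\mathrm{proj}_B$. Here $n$-simplices $\alpha$ of $X$ are regarded as stratified maps $\Delta[n]\to X$ where $\Delta[n]$ carries the stratification with only degenerate simplices thin, and $\partial\Delta[n]$ the induced one. For $n\ge1$, $\tau_n(X,x)$ is the set of equivalence classes under $\sim_{\partial\Delta[n]}$ of $n$-simplices $\alpha$ of $X$ whose restriction to $\partial\Delta[n]$ is constant at $x$. *)

From mathcomp Require Import all_boot.
From mathcomp Require Import zify.
Set Implicit Arguments.
Unset Strict Implicit.
Unset Printing Implicit Defensive.

Definition mono m n (f : {ffun 'I_m.+1 -> 'I_n.+1}) : bool :=
  [forall i : 'I_m.+1, forall j : 'I_m.+1, (i <= j) ==> (f i <= f j)].

Lemma monoP m n (f : {ffun 'I_m.+1 -> 'I_n.+1}) :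
  reflect (forall i j : 'I_m.+1, i <= j -> f i <= f j) (mono f).
Proof.
apply: (iffP forallP) => [H i j hij | H i].
  by have /forallP/(_ j)/implyP := H i; apply.
by apply/forallP => j; apply/implyP; exact: H.
Qed.

Definition Dmap m n := {f : {ffun 'I_m.+1 -> 'I_n.+1} | mono f}.

Definition dfun m n (f : Dmap m n) : 'I_m.+1 -> 'I_n.+1 := fun i => sval f i.

Lemma sig_bool_eq (T : Type) (P : T -> bool) (a b : {x | P x}) :
  sval a = sval b -> a = b.
Proof.
case: a b => [a pa] [b pb] /= e; subst b; congr exist; exact: bool_irrelevance.
Qed.

Lemma dmap_eq m n (f g : Dmap m n) : (forall i, dfun f i = dfun g i) -> f = g.
Proof. by move=> H; apply: sig_bool_eq; apply/ffunP. Qed.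

Lemma dfun_mono m n (f : Dmap m n) (i j : 'I_m.+1) : i <= j -> dfun f i <= dfun f j.
Proof. exact: (monoP _ (proj2_sig f)). Qed.

Lemma did_mono n : mono [ffun i : 'I_n.+1 => i].
Proof. by apply/monoP => i j; rewrite !ffunE. Qed.

Definition did n : Dmap n n := exist (@mono _ _) _ (did_mono n).

Lemma dcomp_mono l m n (g : Dmap m n) (f : Dmap l m) :
  mono [ffun i => dfun g (dfun f i)].
Proof. by apply/monoP => i j hij; rewrite !ffunE; do 2 apply: dfun_mono. Qed.

Definition dcomp l m n (g : Dmap m n) (f : Dmap l m) : Dmap l n :=
  exist (@mono _ _) _ (dcomp_mono g f).

Lemma dconst_mono m n (j : 'I_n.+1) : mono [ffun _ : 'I_m.+1 => j].
Proof. by apply/monoP => i i' _; rewrite !ffunE. Qed.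

Definition dconst m n (j : 'I_n.+1) : Dmap m n := exist (@mono _ _) _ (dconst_mono m j).

Lemma dface_mono n (i : 'I_n.+2) : mono [ffun j : 'I_n.+1 => lift i j].
Proof. by apply/monoP => j j' h; rewrite !ffunE /= leq_bump2. Qed.

Definition dface n (i : 'I_n.+2) : Dmap n n.+1 := exist (@mono _ _) _ (dface_mono i).

Definition dsurj m n (f : Dmap m n) : bool :=
  [forall j : 'I_n.+1, exists i : 'I_m.+1, dfun f i == j].

Record sSet := SSet {
  ssimp :> nat -> Type;
  sact : forall m n, Dmap m n -> ssimp n -> ssimp m;
  sact_id : forall n (x : ssimp n), sact (did n) x = x;
  sact_comp : forall l m n (f : Dmap l m) (g : Dmap m n) (x : ssimp n),
      sact (dcomp g f) x = sact f (sact g x) }.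
Arguments sact {s m n}.

Definition degen (X : sSet) n (x : X n) : Prop :=
  exists m (f : Dmap n m) (y : X m), m < n /\ x = sact f y.

Record strat := Strat {
  ssset :> sSet;
  thin : forall n, ssset n -> Prop;
  thin_deg : forall n (x : ssset n), degen x -> thin x;
  thin0 : forall x : ssset 0, ~ thin x }.
Arguments thin {s n}.

Record smap (X Y : strat) := SMap {
  smf :> forall n, X n -> Y n;
  smf_nat : forall m n (f : Dmap m n) (x : X n), smf (sact f x) = sact f (smf x);
  smf_thin : forall n (x : X n), thin x -> thin (smf x) }.

Lemma dcomp_id m n (x : Dmap m n) : dcomp x (did m) = x.
Proof. by apply: dmap_eq => i; rewrite /dfun /= !ffunE /dfun /= ?ffunE. Qed.

Lemma dcomp_assoc k l m n (x : Dmap m n) (g : Dmap l m) (f : Dmap k l) :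
  dcomp x (dcomp g f) = dcomp (dcomp x g) f.
Proof. by apply: dmap_eq => i; rewrite /dfun /= !ffunE /dfun /= ?ffunE. Qed.

Definition SDelta n : sSet :=
  @SSet (fun m => Dmap m n) (fun m m' f x => dcomp x f)
    (fun m x => dcomp_id x) (fun l m m' f g x => dcomp_assoc x g f).

Definition DeltaStrat n (E : forall m, Dmap m n -> Prop)
  (E0 : forall x : Dmap 0 n, ~ E 0 x) : strat.
Proof.
refine (@Strat (SDelta n) (fun m x => @degen (SDelta n) m x \/ E m x)
          (fun m x d => or_introl d) _).
move=> x [[m [f [y [hm _]]]] | e] //; exact: E0 e.
Defined.

Definition DeltaS n : strat := @DeltaStrat n (fun _ _ => False) (fun _ h => h).

Definition isId n m (x : Dmap m n) : Prop := m = n /\ forall i, val (dfun x i) = val i.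

(* Delta[n.+1]_t : degenerate simplices and the identity thin (n.+1 >= 1) *)
Definition DeltaT (n : nat) : strat.
Proof. refine (@DeltaStrat n.+1 (@isId n.+1) _). by move=> x []. Defined.

Definition kthin n (k : 'I_n.+2) m (x : Dmap m n.+1) : Prop :=
  forall j : 'I_n.+2, k.-1 <= j <= k.+1 -> exists i, dfun x i = j.

Lemma kthin0 n (k : 'I_n.+2) (x : Dmap 0 n.+1) : ~ kthin k x.
Proof.
move=> H.
have hk := ltn_ord k.
have h1 : k.-1 <= (inord k.-1 : 'I_n.+2) <= k.+1 by rewrite inordK; lia.
have h2 : k.-1 <= (inord k.-1.+1 : 'I_n.+2) <= k.+1 by rewrite inordK; lia.
have [i1 e1] := H _ h1.
have [i2 e2] := H _ h2.
have ei : i1 = i2 by rewrite (ord1 i1) (ord1 i2).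
move: e1 e2; rewrite ei => -> /(congr1 (@nat_of_ord _)); rewrite !inordK; lia.
Qed.

Definition DeltaK n (k : 'I_n.+2) : strat := @DeltaStrat n.+1 (@kthin n k) (@kthin0 n k).

Definition inLam n (k : 'I_n.+1) m (x : Dmap m n) : bool :=
  [exists i : 'I_n.+1, (i != k) && [forall j, dfun x j != i]].

Definition DeltaK2 n (k : 'I_n.+3) : strat.
Proof.
refine (@DeltaStrat n.+2 (fun m x => @kthin n.+1 k m x \/ m = n.+1) _).
by move=> x [/kthin0|].
Defined.

(* Delta^k[n.+2]' = Delta^k[n.+2] \cup Lambda^k[n.+2]' :
   additionally the (n+1)-simplices of Lambda^k[n.+2] thin *)
Definition DeltaK1 n (k : 'I_n.+3) : strat.
Proof.
refine (@DeltaStrat n.+2 (fun m x => @kthin n.+1 k m x \/ (m = n.+1 /\ inLam k x)) _).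
by move=> x [/kthin0|[]].
Defined.

Definition sub_closed (Y : sSet) (P : forall n, pred (Y n)) : Prop :=
  forall m n (f : Dmap m n) (y : Y n), P n y -> P m (sact f y).

Unset Implicit Arguments.
Section Sub.
Variables (Y : strat) (P : forall n, pred (Y n)) (HP : sub_closed P).

Definition sub_act m n (f : Dmap m n) (y : {y : Y n | P n y}) : {y : Y m | P m y} :=
  exist _ (sact f (sval y)) (HP _ _ f _ (proj2_sig y)).

Definition sub_sSet : sSet.
Proof.
refine (@SSet (fun n => {y : Y n | P n y}) sub_act _ _).
- by move=> n y; apply: sig_bool_eq; rewrite /= sact_id.
- by move=> l m n f g y; apply: sig_bool_eq; rewrite /= sact_comp.
Defined.

Definition sub_strat : strat.
Proof.
refine (@Strat sub_sSet (fun n y => thin (sval y)) _ _).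
- move=> n y [m [f [y' [hm e]]]]; apply: thin_deg.
  by exists m, f, (sval y'); split => //; rewrite e.
- by move=> y; apply: thin0.
Defined.

Definition sub_incl : smap sub_strat Y.
Proof. by refine (@SMap sub_strat Y (fun n y => sval y) _ _). Defined.
End Sub.
Set Implicit Arguments.
Arguments sub_incl {Y P HP}.

Definition prod_sSet (X Y : sSet) : sSet.
Proof.
refine (@SSet (fun n => (X n * Y n)%type)
           (fun m n f p => (sact f p.1, sact f p.2)) _ _).
- by move=> n [a b]; rewrite /= !sact_id.
- by move=> l m n f g [a b]; rewrite /= !sact_comp.
Defined.

Definition sprod (X Y : strat) : strat.
Proof.
refine (@Strat (prod_sSet X Y) (fun n p => thin p.1 /\ thin p.2) _ _).
- move=> n [a b] [m [f [[a' b'] [hm e]]]]; case: e => -> ->.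
  by split; apply: thin_deg; [exists m, f, a' | exists m, f, b'].
- by move=> [a b] [/thin0].
Defined.

Lemma inLam_closed n (k : 'I_n.+1) : @sub_closed (SDelta n) (fun m x => inLam k x).
Proof.
move=> m m' f y /existsP [i /andP [hik /forallP hj]].
by apply/existsP; exists i; rewrite hik /=; apply/forallP => j;
   rewrite /dfun /= ffunE; exact: hj.
Qed.

Definition LamK n (k : 'I_n.+2) : strat :=
  @sub_strat (DeltaK k) (fun m x => inLam k x) (@inLam_closed n.+1 k).

Definition LamIncl n (k : 'I_n.+2) : smap (LamK k) (DeltaK k) := sub_incl.

Definition PrimeIncl n (k : 'I_n.+3) : smap (DeltaK1 k) (DeltaK2 k).
Proof.
refine (@SMap (DeltaK1 k) (DeltaK2 k) (fun m x => x) (fun _ _ _ _ => erefl) _).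
by move=> m x [d | [e | [e _]]]; [left | right; left | right; right].
Defined.

Definition rlp (A B : strat) (i : smap A B) (X : strat) : Prop :=
  forall f : smap A X, exists g : smap B X, forall n (a : A n), g n (i n a) = f n a.

Definition weak_complicial (X : strat) : Prop :=
  (forall n (k : 'I_n.+2), rlp (LamIncl k) X) /\
  (forall n (k : 'I_n.+3), rlp (PrimeIncl k) X).

(* f ~_B g, with B a (closed) predicate of simplices of A;
   Delta[1]_t is DeltaT 0 *)
Definition htpy (A X : strat) (B : forall n, pred (A n)) (f g : smap A X) : Prop :=
  exists H : smap (sprod A (DeltaT 0)) X,
    (forall n (a : A n), H n (a, dconst n (ord0 : 'I_2)) = f n a) /\
    (forall n (a : A n), H n (a, dconst n (ord_max : 'I_2)) = g n a) /\
    (forall n (a : A n) (t : Dmap n 1), B n a -> H n (a, t) = f n a).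

Definition yon (X : strat) n (a : X n) : smap (DeltaS n) X.
Proof.
refine (@SMap (DeltaS n) X (fun m f => sact f a) _ _).
- by move=> m m' f g /=; rewrite sact_comp.
- move=> m g [[m' [f [y [hm e]]]] | []]; apply: thin_deg.
  exists m', f, (sact y a); split => //; rewrite e /= sact_comp //.
Defined.

Definition bdry n : forall m, pred (DeltaS n m) := fun m f => ~~ dsurj f.

Definition shtpy (X : strat) n (a b : X n) : Prop :=
  htpy (@bdry n) (yon a) (yon b).

Definition cst (X : strat) m (x : X 0) : X m := sact (dconst m (ord0 : 'I_1)) x.

Definition bdry_const (X : strat) n (a : X n) (x : X 0) : Prop :=
  forall m (f : Dmap m n), ~~ dsurj f -> sact f a = cst m x.

(* Say that [c] is a composite of [a] and [b] in position [j] if some thin (n+1)-simplex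
   has faces [a], [c], [b] in positions [j], [j+1], [j+2] and is constant at [x] elsewhere;
   thus [θ] makes [d_n θ] a composite of [α] and [β] in position [n-1]. Filling the inner
   3-dimensional horns at positions [j+1] and [j+2] gives two rules for such composites.
   A homotopy [α ~ α'] rel boundary yields a composite of the constant simplex and [α]
   equal to [α'], by composing the thin (n+1)-simplices of the prism Δ[n] × Δ[1] one
   position at a time; conversely, precomposing such a composite with the collapse
   Δ[n] × Δ[1] → Δ[n+1] gives a homotopy. The two horn rules, applied to the composites
   coming from [α ~ α'], [β ~ β'], [θ] and [θ'], produce a composite of the constant
   simplex and [d_n θ] equal to [d_n θ'], whence [d_n θ ~ d_n θ']. *)

From mathcomp Require Import all_boot zify.
Set Implicit Arguments. Unset Strict Implicit. Unset Printing Implicit Defensive.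

(** * Monotone maps *)

Lemma dcompE l m n (g : Dmap m n) (f : Dmap l m) i : dfun (dcomp g f) i = dfun g (dfun f i).
Proof. by rewrite /dfun /= ffunE. Qed.

Lemma dfaceE n (i : 'I_n.+2) j : dfun (dface i) j = lift i j.
Proof. by rewrite /dfun /= ffunE. Qed.

Lemma didE n i : dfun (did n) i = i.
Proof. by rewrite /dfun /= ffunE. Qed.

Lemma dconstE m n (j : 'I_n.+1) i : dfun (dconst m j) i = j.
Proof. by rewrite /dfun /= ffunE. Qed.

Section DmapOf.
Variables (m n : nat) (f : 'I_m.+1 -> 'I_n.+1).
Hypothesis f_mono : {homo f : i j / i <= j}.

Lemma dmap_of_mono : mono [ffun i => f i].
Proof. by apply/monoP => i j hij; rewrite !ffunE; apply: f_mono. Qed.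

Definition dmap_of : Dmap m n := exist (@mono m n) _ dmap_of_mono.

Lemma dmap_ofE i : dfun dmap_of i = f i.
Proof. by rewrite /dfun /= ffunE. Qed.
End DmapOf.

Lemma dmap_ext m n (f g : Dmap m n) :
  (forall i, nat_of_ord (dfun f i) = nat_of_ord (dfun g i)) -> f = g.
Proof. by move=> H; apply: dmap_eq => i; apply: ord_inj; apply: H. Qed.

Lemma dcomp_idl m n (f : Dmap m n) : dcomp (did n) f = f.
Proof. by apply: dmap_ext => i; rewrite dcompE didE. Qed.

Definition misses m N (g : Dmap m N) (i : 'I_N.+1) := forall t, dfun g t <> i.

Lemma misses_comp l m N (g : Dmap m N) (f : Dmap l m) i :
  misses g i -> misses (dcomp g f) i.
Proof. by move=> H t; rewrite dcompE. Qed.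

Lemma misses_face N (i : 'I_N.+2) : misses (dface i) i.
Proof. by move=> t; rewrite dfaceE; apply/eqP; rewrite eq_sym neq_lift. Qed.

Lemma dsurjP m N (g : Dmap m N) : reflect (forall j, exists t, dfun g t = j) (dsurj g).
Proof.
apply: (iffP forallP) => [H j | H j]; last by have [t <-] := H j; apply/existsP; exists t.
by have /existsP [t /eqP <-] := H j; exists t.
Qed.

Lemma dsurjPn m N (g : Dmap m N) : reflect (exists i, misses g i) (~~ dsurj g).
Proof.
apply: (iffP forallPn) => [[i /existsPn H] | [i H]].
  by exists i => t e; move: (H t); rewrite e eqxx.
by exists i; apply/existsPn => t; apply/eqP; apply: H.
Qed.

Definition ddegen_fun N (j : nat) (p : 'I_N.+2) : 'I_N.+1 := inord (minn (unbump j p) N).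

Lemma ddegen_fun_mono N j : {homo @ddegen_fun N j : p q / p <= q}.
Proof. by move=> p q; rewrite /ddegen_fun !inordK ?ltnS ?geq_minr // /unbump; lia. Qed.

(* For [j <= N] the codegeneracy [N.+1] -> [N] hitting [j] twice; the clamping by [N]
   makes [ddegen N j] a retraction of [dface j] for [j = N.+1] as well. *)
Definition ddegen N j : Dmap N.+1 N := dmap_of (@ddegen_fun_mono N j).

Lemma ddegen_val N j p : nat_of_ord (dfun (ddegen N j) p) = minn (unbump j p) N.
Proof. by rewrite dmap_ofE /ddegen_fun inordK // ltnS geq_minr. Qed.

Lemma ddegen_face_id N j (i : 'I_N.+2) : (i == j :> nat) || (i == j.+1 :> nat) ->
  dcomp (ddegen N j) (dface i) = did N.
Proof.
move=> h; apply: dmap_ext => t; rewrite dcompE ddegen_val dfaceE didE /=.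
by have := ltn_ord t; move: h; rewrite /unbump /bump; lia.
Qed.

Lemma dface_ddegenK m N (i : 'I_N.+2) (g : Dmap m N.+1) :
  misses g i -> dcomp (dface i) (dcomp (ddegen N i) g) = g.
Proof.
move=> H; apply: dmap_ext => t; rewrite !dcompE dfaceE /= ddegen_val.
have ne : nat_of_ord (dfun g t) <> i by move=> e; apply: (H t); apply: ord_inj.
by have := ltn_ord (dfun g t); have := ltn_ord i; rewrite /bump /unbump; lia.
Qed.

Lemma ddegen_face_nsurj N j (i : 'I_N.+2) : j <= N -> i != j :> nat -> i != j.+1 :> nat ->
  ~~ dsurj (dcomp (ddegen N j) (dface i)).
Proof.
move=> hj h1 h2; have hi := ltn_ord i; apply/dsurjPn.
exists (inord (if i < j then nat_of_ord i else i.-1)) => t /(congr1 (@nat_of_ord _)).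
rewrite dcompE ddegen_val dfaceE /= inordK; last by case: ifP; lia.
by have := ltn_ord t; rewrite /unbump /bump; case: ifP; lia.
Qed.

Lemma dface_dcomp_eq N (i i' : 'I_N.+3) (j j' : 'I_N.+2) :
  (forall t, t <= N -> bump i (bump j t) = bump i' (bump j' t)) ->
  dcomp (dface i) (dface j) = dcomp (dface i') (dface j').
Proof.
move=> H; apply: dmap_ext => t; rewrite !dcompE !dfaceE /=; apply: H.
by have := ltn_ord t; lia.
Qed.

Lemma dmap_noninj_factor m N (g : Dmap m N) (t t' : 'I_m.+1) :
  t < t' -> dfun g t = dfun g t' ->
  exists m' (f : Dmap m m') (g' : Dmap m' N), m' < m /\ g = dcomp g' f.
Proof.
case: m g t t' => [|m] g t t' ltt' eqg; first by have := ltn_ord t'; lia.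
have ht : t < m.+1 by have := ltn_ord t'; lia.
exists m, (ddegen m t), (dcomp g (dface (inord t.+1))); split => //.
have gS : dfun g (inord t.+1) = dfun g t.
  apply/val_inj/eqP; rewrite eqn_leq; apply/andP; split.
    by rewrite eqg; apply: dfun_mono; rewrite inordK.
  by apply: dfun_mono; rewrite inordK.
apply: dmap_eq => q; rewrite !dcompE dfaceE.
have hq := ltn_ord q.
case: (eqVneq (nat_of_ord q) t.+1) => e.
  have -> : lift (inord t.+1) (dfun (ddegen m t) q) = t.
    by apply: ord_inj; rewrite /= ddegen_val inordK // e /bump /unbump; lia.
  by rewrite -gS; congr (dfun g _); apply: val_inj; rewrite /= inordK.
congr (dfun g _); apply: ord_inj; rewrite /= ddegen_val inordK //.
by move: e; rewrite /bump /unbump; lia.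
Qed.

Lemma dinj_or_collapse m N (g : Dmap m N) :
  injective (dfun g) \/ exists t t' : 'I_m.+1, t < t' /\ dfun g t = dfun g t'.
Proof.
case: (boolP [exists t : 'I_m.+1, exists t' : 'I_m.+1, (t < t') && (dfun g t == dfun g t')]).
  by move=> /existsP [t /existsP [t' /andP [h /eqP e]]]; right; exists t, t'.
move=> /negP H; left => t t' e.
case: (ltngtP t t') => h; last exact: val_inj.
- by case: H; apply/existsP; exists t; apply/existsP; exists t'; rewrite h e eqxx.
- by case: H; apply/existsP; exists t'; apply/existsP; exists t; rewrite h e eqxx.
Qed.

Lemma dmap_degen_noninj m m' (h : Dmap m m') :
  m' < m -> exists t t' : 'I_m.+1, t < t' /\ dfun h t = dfun h t'.
Proof.
case: (dinj_or_collapse h) => // inj.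
by have := leq_card _ inj; rewrite !card_ord; lia.
Qed.

Lemma dinj_dsurj_dim m N (g : Dmap m N) : injective (dfun g) -> dsurj g -> m = N.
Proof.
move=> inj /dsurjP surj; apply/eqP; rewrite -eqSS eqn_leq.
have := leq_card _ inj; rewrite !card_ord => -> /=.
have sub : 'I_N.+1 \subset codom (dfun g).
  by apply/subsetP => j _; have [t <-] := surj j; apply: codom_f.
by have := subset_leq_card sub; rewrite card_codom // !card_ord.
Qed.

Lemma dinj_endo_id N (g : Dmap N N) : injective (dfun g) -> g = did N.
Proof.
move=> inj.
have strict : forall a b : 'I_N.+1, a < b -> dfun g a < dfun g b.
  move=> a b hab; rewrite ltn_neqAle dfun_mono ?andbT; last exact: ltnW.
  by apply/negP => /eqP /val_inj /inj e; move: hab; rewrite e ltnn.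
pose G u := nat_of_ord (dfun g (inord u)).
have ge : forall u, u <= N -> u <= G u.
  elim=> [|u IH] hu //.
  have lt : (inord u : 'I_N.+1) < (inord u.+1 : 'I_N.+1) by rewrite !inordK; lia.
  by have := strict _ _ lt; have := IH (ltnW hu); rewrite /G; lia.
have le : forall d, d <= N -> G (N - d) <= N - d.
  elim=> [|d IH] hd; first by rewrite subn0 /G; have := ltn_ord (dfun g (inord N)); lia.
  have lt : (inord (N - d.+1) : 'I_N.+1) < (inord (N - d) : 'I_N.+1) by rewrite !inordK; lia.
  by have := strict _ _ lt; have := IH (ltnW hd); rewrite /G; lia.
apply: dmap_ext => t; rewrite didE.
have ht : nat_of_ord t <= N := ltn_ord t.
by have := ge _ ht; have := le (N - t) (leq_subr _ _); rewrite subKn // /G inord_val /=; lia.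
Qed.

(** * Thin simplices and horn filling *)

Section Thin.
Variables (X : strat) (x : X 0).

Lemma sact_cst m m' (f : Dmap m' m) : sact f (cst m x) = cst m' x.
Proof.
rewrite /cst -sact_comp; congr (sact _ x); apply: dmap_eq => i.
by rewrite dcompE !dconstE.
Qed.

Lemma cst_thin m : 0 < m -> thin (cst m x).
Proof. by move=> hm; apply: thin_deg; exists 0, (dconst m ord0), x. Qed.

Lemma sact_noninj_thin m N (g : Dmap m N) (z : X N) (t t' : 'I_m.+1) :
  t < t' -> dfun g t = dfun g t' -> thin (sact g z).
Proof.
move=> h e; have [m' [f [g' [hm ->]]]] := dmap_noninj_factor h e.
by apply: thin_deg; exists m', f, (sact g' z); rewrite sact_comp.
Qed.

Lemma sact_endo_thin N (g : Dmap N N) (z : X N) : thin z -> thin (sact g z).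
Proof.
move=> tz; case: (dinj_or_collapse g) => [inj | [t [t' [h e]]]].
  by rewrite (dinj_endo_id inj) sact_id.
exact: sact_noninj_thin h e.
Qed.

(* [g] is non-injective, or misses a face, necessarily outside [P], or is the identity. *)
Lemma sact_thin_covering N (z : X N.+1) (P : 'I_N.+2 -> Prop) m (g : Dmap m N.+1) :
  thin z -> 0 < m ->
  (forall i, ~ P i -> sact (dface i) z = cst N x) ->
  (forall i, P i -> exists t, dfun g t = i) ->
  thin (sact g z).
Proof.
move=> tz hm hf hP.
case: (dinj_or_collapse g) => [inj | [t [t' [h e]]]]; last exact: sact_noninj_thin h e.
case: (boolP (dsurj g)) => [surj | /dsurjPn [i hi]].
  by have em := dinj_dsurj_dim inj surj; subst m; apply: sact_endo_thin.
have nP : ~ P i by move=> /hP [t ht]; exact: hi t ht.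
by rewrite -(dface_ddegenK hi) sact_comp hf // sact_cst; apply: cst_thin.
Qed.
End Thin.

Lemma thin_face_of_thin_horn (X : strat) n (k : 'I_n.+3) (g : smap (DeltaK k) X) :
  weak_complicial X ->
  (forall a : Dmap n.+1 n.+2, inLam k a -> thin (g n.+1 a)) -> thin (g n.+1 (dface k)).
Proof.
move=> wc hthin.
have g1thin : forall m (a : DeltaK1 k m), thin a -> thin (g m a).
  move=> m a [d | [kt | [em ha]]]; [by apply: smf_thin; left | by apply: smf_thin; right |].
  by subst m; apply: hthin.
pose g1 := @SMap (DeltaK1 k) X (fun m a => g m a) (fun m m' f a => smf_nat g f a) g1thin.
have [g2 hg2] := wc.2 n k g1.
by rewrite -(hg2 n.+1 (dface k)); apply: smf_thin; right; right.
Qed.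

Section HornFilling.
Variables (X : strat) (n : nat) (k : 'I_n.+3) (y : 'I_n.+3 -> X n.+1).
Hypothesis y_compat : forall i q : 'I_n.+3, i < q -> i != k -> q != k ->
  sact (dface (inord i : 'I_n.+2)) (y q) = sact (dface (inord q.-1 : 'I_n.+2)) (y i).
Hypothesis y_thin : forall (i : 'I_n.+3) m (g : Dmap m n.+1), i != k ->
  kthin k (dcomp (dface i) g) -> thin (sact g (y i)).

Lemma horn_val_indep m (g : Dmap m n.+2) (i q : 'I_n.+3) :
  misses g i -> misses g q -> i != k -> q != k ->
  sact (dcomp (ddegen n.+1 i) g) (y i) = sact (dcomp (ddegen n.+1 q) g) (y q).
Proof.
wlog: i q / i <= q.
  move=> W hi hq ik qk; case: (leqP i q) => h; first exact: W.
  by symmetry; apply: W => //; apply: ltnW.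
rewrite leq_eqVlt => /orP [/eqP e | lt] hi hq ik qk; first by rewrite (ord_inj e).
have hqb := ltn_ord q.
have gne t : nat_of_ord (dfun g t) <> i /\ nat_of_ord (dfun g t) <> q.
  by split => e; [apply: (hi t) | apply: (hq t)]; apply: ord_inj.
(* both sides factor through the codimension-2 face missing [i] and [q] *)
set h := dcomp (ddegen n (inord i : 'I_n.+2)) (dcomp (ddegen n.+1 q) g).
have e1 : dcomp (ddegen n.+1 q) g = dcomp (dface (inord i)) h.
  rewrite /h dface_ddegenK // => t /(congr1 (@nat_of_ord _)).
  rewrite /= dcompE ddegen_val inordK; last lia.
  by have [] := gne t; have := ltn_ord (dfun g t); rewrite /unbump; lia.
have e2 : dcomp (ddegen n.+1 i) g = dcomp (dface (inord q.-1)) h.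
  apply: dmap_ext => t; rewrite /h !dcompE dfaceE /= !ddegen_val !inordK; try lia.
  by have [] := gne t; have := ltn_ord (dfun g t); rewrite /unbump /bump; lia.
by rewrite e1 e2 !sact_comp (y_compat lt ik qk).
Qed.

Definition missed_face m (g : Dmap m n.+2) : 'I_n.+3 :=
  odflt k [pick i | (i != k) && [forall t, dfun g t != i]].

Lemma missed_faceP m (g : Dmap m n.+2) :
  inLam k g -> missed_face g != k /\ misses g (missed_face g).
Proof.
move=> /existsP [i /andP [ik /forallP H]]; rewrite /missed_face; case: pickP.
  by move=> j /andP [jk /forallP Hj] /=; split => // t e; move: (Hj t); rewrite e eqxx.
by move=> H'; move: (H' i); rewrite ik (introT forallP H).
Qed.

(* A horn simplex missing the face [i] factors through [dface i] and is sent to the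
   corresponding simplex of [y i]. *)
Definition horn_val m (g : LamK k m) : X m :=
  let i := missed_face (sval g : Dmap m n.+2) in sact (dcomp (ddegen n.+1 i) (sval g)) (y i).

Lemma horn_val_eq m (g : LamK k m) (i : 'I_n.+3) :
  i != k -> misses (sval g : Dmap m n.+2) i ->
  horn_val g = sact (dcomp (ddegen n.+1 i) (sval g)) (y i).
Proof.
by move=> ik hi; have [pk pm] := missed_faceP (proj2_sig g); apply: horn_val_indep.
Qed.

Lemma horn_val_nat m m' (f : Dmap m m') (g : LamK k m') :
  horn_val (sact f g) = sact f (horn_val g).
Proof.
have [pk pm] := missed_faceP (proj2_sig g).
rewrite (@horn_val_eq _ _ (missed_face (sval g : Dmap m' n.+2))) //=; last exact: misses_comp.
by rewrite dcomp_assoc sact_comp.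
Qed.

Lemma horn_val_thin m (g : LamK k m) : thin g -> thin (horn_val g).
Proof.
have [pk pm] := missed_faceP (proj2_sig g); rewrite /horn_val.
move: pk pm; set i := missed_face _ => pk pm.
case=> [[m' [f [z [hm e]]]] | kt].
  rewrite [sval g]e /= dcomp_assoc sact_comp.
  by apply: thin_deg; exists m', f, (sact (dcomp (ddegen n.+1 i) z) (y i)).
by apply: y_thin => //; rewrite dface_ddegenK.
Qed.

Definition horn_map : smap (LamK k) X := SMap horn_val_nat horn_val_thin.

Hypothesis wc : weak_complicial X.

Lemma horn_fill : exists w : X n.+2,
  (forall i, i != k -> sact (dface i) w = y i) /\
  ((forall i, i != k -> thin (y i)) -> thin (sact (dface k) w)).
Proof.
have [g hg] := wc.1 n.+1 k horn_map.
have gE : forall m (a : Dmap m n.+2) i, inLam k a -> i != k -> misses a i ->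
    g m a = sact (dcomp (ddegen n.+1 i) a) (y i).
  by move=> m a i ha ik hi; rewrite (hg m (exist _ a ha)); apply: horn_val_eq.
have faceE : forall i, sact (dface i) (g n.+2 (did n.+2)) = g n.+1 (dface i).
  by move=> i; rewrite -smf_nat /= dcomp_idl.
exists (g n.+2 (did n.+2)); split.
  move=> i ik; have hi : inLam k (dface i).
    by apply/existsP; exists i; rewrite ik; apply/forallP => t; apply/eqP; apply: misses_face.
  by rewrite faceE (gE _ _ i hi ik (@misses_face _ i)) ddegen_face_id ?eqxx // sact_id.
move=> ty; rewrite faceE; apply: thin_face_of_thin_horn => // a ha.
have [pk pm] := missed_faceP ha.
by rewrite (gE _ _ _ ha pk pm); apply: sact_endo_thin; apply: ty.
Qed.
End HornFilling.

(** * Composites *)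

Ltac nat_cases := repeat match goal with
  | |- context [?a == ?b] => case: (eqVneq a b) => ?; try (exfalso; lia)
  end.

Section Composites.
Variables (X : strat) (x : X 0) (n : nat).
Local Notation eps := (cst n x).

Definition thin_faces (w : X n.+1) (F : nat -> X n) :=
  thin w /\ forall p : 'I_n.+2, sact (dface p) w = F p.

Definition band_faces j (f : nat -> X n) (i : nat) : X n :=
  if j <= i <= j.+2 then f (i - j) else eps.

Definition composite j (a b c : X n) : Prop :=
  exists w, thin_faces w (band_faces j (nth eps [:: a; c; b])).

Lemma thin_faces_ext (w : X n.+1) (F G : nat -> X n) :
  (forall p, p < n.+2 -> F p = G p) -> thin_faces w F -> thin_faces w G.
Proof. by move=> e [t h]; split => // p; rewrite h e. Qed.

Lemma band_faces_ext j (f g : nat -> X n) :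
  (forall p, p < 3 -> f p = g p) -> band_faces j f =1 band_faces j g.
Proof. by move=> e i; rewrite /band_faces; case: ifP => // h; apply: e; lia. Qed.

Lemma sact_misses_cst_face (w : X n.+1) F m (g : Dmap m n.+1) (c : 'I_n.+2) :
  thin_faces w F -> misses g c -> F c = eps -> sact g w = cst m x.
Proof. by move=> [_ h] hc e; rewrite -(dface_ddegenK hc) sact_comp h e sact_cst. Qed.

Lemma band_faces3E j (a b c : X n) i :
  band_faces j (nth eps [:: a; b; c]) i =
  if i == j then a else if i == j.+1 then b else if i == j.+2 then c else eps.
Proof.
rewrite /band_faces; case: ifP => hi; nat_cases => //; try lia.
- by have -> : i - j = 0 by lia.
- by have -> : i - j = 1 by lia.
- by have -> : i - j = 2 by lia.
Qed.

Lemma composite_shift j (b c : X n) : composite j eps b c <-> composite j.+1 c eps b.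
Proof.
suff E : band_faces j (nth eps [:: eps; c; b]) =1 band_faces j.+1 (nth eps [:: c; b; eps]).
  by split=> -[w hw]; exists w; apply: thin_faces_ext hw => p _; rewrite E.
by move=> i; rewrite !band_faces3E; nat_cases.
Qed.

End Composites.

(* [Y a] is to be face [j+a] of an (n+2)-simplex and [F a p] its face [j+p]; [F_compat] is
   the simplicial identity [d_a d_b = d_(b-1) d_a] for [a < b]. *)
Section InnerTetrahedron.
Variables (X : strat) (x : X 0) (n j k : nat).
Hypotheses (hj : j < n) (hk : 0 < k < 3).
Variables (F : nat -> nat -> X n) (Y : nat -> X n.+1).
Hypothesis F_compat : forall a b, a < b < 4 -> a != k -> b != k -> F b a = F a b.-1.
Hypothesis Y_faces : forall a, a < 4 -> a != k -> thin_faces (Y a) (band_faces x j (F a)).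

Definition tetra_face (i : 'I_n.+3) : X n.+1 :=
  if j <= i <= j.+3 then Y (i - j) else cst n.+1 x.

Local Notation K := (inord (j + k) : 'I_n.+3).

Lemma neq_K (i : 'I_n.+3) : (i != K) = (nat_of_ord i != j + k).
Proof. by rewrite -val_eqE /= inordK //; lia. Qed.

Lemma Y_faceE a p : a < 4 -> a != k -> p < n.+2 ->
  sact (dface (inord p)) (Y a) = band_faces x j (F a) p.
Proof. by move=> ha ak hp; have [_ ->] := Y_faces ha ak; rewrite inordK. Qed.

Lemma tetra_face_compat (i q : 'I_n.+3) : i < q -> i != K -> q != K ->
  sact (dface (inord i : 'I_n.+2)) (tetra_face q) =
  sact (dface (inord q.-1 : 'I_n.+2)) (tetra_face i).
Proof.
rewrite !neq_K => iq iK qK.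
have hq := ltn_ord q.
rewrite /tetra_face; case: ifP => hqj; case: ifP => hij; rewrite ?sact_cst.
- rewrite !Y_faceE; try lia; rewrite /band_faces !ifT; try lia.
  by rewrite F_compat; try lia; congr (F _ _); lia.
- by rewrite Y_faceE; try lia; rewrite /band_faces ifF //; lia.
- by rewrite Y_faceE; try lia; rewrite /band_faces ifF //; lia.
- by [].
Qed.

Lemma tetra_face_thin (i : 'I_n.+3) m (g : Dmap m n.+1) :
  i != K -> kthin K (dcomp (dface i) g) -> thin (sact g (tetra_face i)).
Proof.
rewrite neq_K => iK kt.
case: m g kt => [|m] g kt; first by case: (kthin0 kt).
rewrite /tetra_face; case: ifP => hij; last by rewrite sact_cst; apply: cst_thin.
have hi := ltn_ord i.
have hit : forall p, (j + k).-1 <= p <= (j + k).+1 -> exists t, bump i (dfun g t) = p.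
  move=> p hp; have [t ht] := kt (inord p) ltac:(rewrite !inordK //; lia).
  by exists t; move: (congr1 val ht); rewrite dcompE dfaceE /= inordK //; lia.
(* the image of [dcomp (dface i) g] contains [j+k-1], [j+k], [j+k+1] but not [i] *)
have far : nat_of_ord i != (j + k).-1 /\ nat_of_ord i != (j + k).+1.
  by split; apply/eqP => e; have [t] := hit i ltac:(lia); rewrite /bump; lia.
apply: (sact_thin_covering (P := fun p : 'I_n.+2 => j <= p <= j.+2)) => //.
- by have [] := Y_faces (a := i - j) ltac:(lia) ltac:(lia).
- move=> p /negP hp; have [_ ->] := Y_faces (a := i - j) ltac:(lia) ltac:(lia).
  by rewrite /band_faces (negbTE hp).
- move=> p hp; have [t ht] := hit (bump i p) ltac:(move: hp; rewrite /bump; lia).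
  by exists t; apply: ord_inj; move: ht; rewrite /bump; lia.
Qed.

Lemma inner_tetra_fill : weak_complicial X ->
  exists w, thin_faces w (band_faces x j (fun p => if p < k then F p k.-1 else F p.+1 k)).
Proof.
move=> wc; have [w [hw tw]] := horn_fill tetra_face_compat tetra_face_thin wc.
exists (sact (dface K) w); split.
  apply: tw => i; rewrite neq_K => iK; rewrite /tetra_face; case: ifP => hij; last exact: cst_thin.
  by have [] := Y_faces (a := i - j) ltac:(lia) ltac:(lia).
move=> p; have hp := ltn_ord p; rewrite -sact_comp.
case: (ltnP p (j + k)) => hpK.
  rewrite (@dface_dcomp_eq _ _ (inord p) _ (inord (j + k).-1)); last first.
    by move=> t ht; rewrite !inordK /bump; lia.
  rewrite sact_comp hw; last by rewrite neq_K inordK //; lia.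
  rewrite /tetra_face inordK; last lia.
  case: ifP => hpj; last first.
    by rewrite sact_cst /band_faces ifF //; lia.
  rewrite Y_faceE; try lia; rewrite /band_faces !ifT; try lia.
  by congr (F _ _); lia.
rewrite (@dface_dcomp_eq _ _ (inord p.+1) _ (inord (j + k))); last first.
  by move=> t ht; rewrite !inordK /bump; lia.
rewrite sact_comp hw; last by rewrite neq_K inordK //; lia.
rewrite /tetra_face inordK; last lia.
case: ifP => hpj; last first.
  by rewrite sact_cst /band_faces ifF //; lia.
rewrite Y_faceE; try lia; rewrite /band_faces ifT; last lia.
rewrite ifT; last lia; rewrite ifF; last lia.
by congr (F _ _); lia.
Qed.
End InnerTetrahedron.

Section CompositeCalculus.
Variables (X : strat) (x : X 0) (n j : nat).
Hypotheses (wc : weak_complicial X) (hj : j < n).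
Local Notation eps := (cst n x).

Lemma degen_thin_faces i (u : X n) : i <= n -> bdry_const u x ->
  thin_faces (sact (ddegen n i) u) (fun p => if (p == i) || (p == i.+1) then u else eps).
Proof.
move=> hi bu; split; first by apply: thin_deg; exists n, (ddegen n i), u.
move=> p; rewrite -sact_comp; case: ifP => h; first by rewrite ddegen_face_id // sact_id.
by apply: bu; apply: ddegen_face_nsurj => //; move: h; lia.
Qed.

Lemma composite_degen_l (u : X n) : bdry_const u x -> composite x j u eps u.
Proof.
move=> bu; exists (sact (ddegen n j) u).
by apply: thin_faces_ext (degen_thin_faces (ltnW hj) bu) => p _; rewrite band_faces3E; nat_cases.
Qed.

Lemma composite_degen_r (u : X n) : bdry_const u x -> composite x j eps u u.
Proof.
move=> bu; exists (sact (ddegen n j.+1) u).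
by apply: thin_faces_ext (degen_thin_faces hj bu) => p _; rewrite band_faces3E; nat_cases.
Qed.

Lemma composite_cst : composite x j eps eps eps.
Proof.
exists (cst n.+1 x); split; first exact: cst_thin.
by move=> p; rewrite sact_cst band_faces3E; nat_cases.
Qed.

(* [eab] is the common face of the faces [j+a] and [j+b] of an (n+2)-simplex obtained by
   filling the horn at [j+1]; [composite_horn2] fills it at [j+2]. *)
Lemma composite_horn1 (e01 e02 e03 e12 e13 e23 : X n) :
  composite x j e01 e03 e02 -> composite x j e02 e23 e12 -> composite x j e03 e23 e13 ->
  composite x j e01 e13 e12.
Proof.
move=> [w0 h0] [w2 h2] [w3 h3].
pose F a := nth eps (nth [::] [:: [:: e01; e02; e03]; [::]; [:: e02; e12; e23];
                                  [:: e03; e13; e23]] a).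
pose Y a := if a == 0 then w0 else if a == 2 then w2 else w3.
have [||w hw] := @inner_tetra_fill X x n j 1 hj isT F Y _ _ wc.
- by move=> [|[|[|[|a]]]] [|[|[|[|b]]]] //=; rewrite andbF.
- by move=> [|[|[|[|a]]]].
by exists w; apply: thin_faces_ext hw => p _; apply: band_faces_ext => -[|[|[|q]]].
Qed.

Lemma composite_horn2 (e01 e02 e03 e12 e13 e23 : X n) :
  composite x j e01 e03 e02 -> composite x j e01 e13 e12 -> composite x j e03 e23 e13 ->
  composite x j e02 e23 e12.
Proof.
move=> [w0 h0] [w1 h1] [w3 h3].
pose F a := nth eps (nth [::] [:: [:: e01; e02; e03]; [:: e01; e12; e13]; [::];
                                  [:: e03; e13; e23]] a).
pose Y a := if a == 0 then w0 else if a == 1 then w1 else w3.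
have [||w hw] := @inner_tetra_fill X x n j 2 hj isT F Y _ _ wc.
- by move=> [|[|[|[|a]]]] [|[|[|[|b]]]] //=; rewrite andbF.
- by move=> [|[|[|[|a]]]].
by exists w; apply: thin_faces_ext hw => p _; apply: band_faces_ext => -[|[|[|q]]].
Qed.

Lemma composite_rotate (u w : X n) :
  bdry_const u x -> composite x j u eps w -> composite x j eps w u.
Proof.
by move=> bu; apply: composite_horn1; [apply: composite_degen_r | apply: composite_degen_l].
Qed.

Lemma composite_trans (u v w : X n) :
  composite x j eps v u -> composite x j eps w v -> composite x j eps w u.
Proof. exact: composite_horn2 composite_cst. Qed.
End CompositeCalculus.

(** * Homotopies and composites *)

Definition dstep_fun m j (p : 'I_m.+1) : 'I_2 := inord (j <= p).

Lemma dstep_fun_mono m j : {homo @dstep_fun m j : p q / p <= q}.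
Proof. by move=> p q pq; rewrite /dstep_fun !inordK ?ltnS ?leq_b1 //; lia. Qed.

Definition dstep m j : Dmap m 1 := dmap_of (@dstep_fun_mono m j).

Lemma dstep_val m j p : nat_of_ord (dfun (dstep m j) p) = (j <= p).
Proof. by rewrite dmap_ofE /dstep_fun inordK // ltnS leq_b1. Qed.

Section HomotopyToComposite.
Variables (X : strat) (x : X 0) (n : nat) (a a' : X n).
Hypotheses (hn : 0 < n) (ba : bdry_const a x) (ba' : bdry_const a' x) (wc : weak_complicial X).
Variable H : smap (sprod (DeltaS n) (DeltaT 0)) X.
Hypotheses (H0 : forall m (f : Dmap m n), H m (f, dconst m ord0) = sact f a)
           (H1 : forall m (f : Dmap m n), H m (f, dconst m ord_max) = sact f a')
           (Hb : forall m (f : Dmap m n) t, bdry f -> H m (f, t) = sact f a).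
Local Notation eps := (cst n x).

Local Notation S j := (H n (did n, dstep n j)).

Lemma prism_first : S 0 = a'.
Proof.
have -> : dstep n 0 = dconst n ord_max by apply: dmap_ext => q; rewrite dstep_val dconstE.
by rewrite H1 sact_id.
Qed.

Lemma prism_last : S n.+1 = a.
Proof.
have -> : dstep n n.+1 = dconst n ord0.
  by apply: dmap_ext => q; rewrite dstep_val dconstE /=; have := ltn_ord q; lia.
by rewrite H0 sact_id.
Qed.

Lemma prism_composite j : j <= n -> composite x j (S j) eps (S j.+1).
Proof.
move=> hj; exists (H n.+1 (ddegen n j, dstep n.+1 j.+1)); split.
  apply: smf_thin; split.
    by left; exists n, (ddegen n j), (did n); split => //=; rewrite dcomp_idl.
  by left; exists 1, (dstep n.+1 j.+1), (did 1); split; [lia | by rewrite /= dcomp_idl].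
move=> p; rewrite -smf_nat /= band_faces3E.
case: (boolP ((p == j :> nat) || (p == j.+1 :> nat))) => hp; last first.
  have nsurj : ~~ dsurj (dcomp (ddegen n j) (dface p)).
    by apply: ddegen_face_nsurj => //; lia.
  by rewrite Hb // ba //; nat_cases.
have -> : dcomp (dstep n.+1 j.+1) (dface p) = dstep n p.
  by apply: dmap_ext => q; rewrite dcompE !dstep_val dfaceE /= /bump; lia.
by rewrite ddegen_face_id //; nat_cases; congr (H n (_, dstep n _)); lia.
Qed.

Lemma prism_chain j : j <= n -> composite x j (S 0) eps (S j.+1).
Proof.
elim: j => [|j IH] hj; first exact: prism_composite.
have bS0 : bdry_const (S 0) x by rewrite prism_first.
have hjn : j < n by lia.
apply/composite_shift; apply: (composite_trans (v := S j.+1) wc hjn).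
- by move: (composite_rotate wc hjn bS0 (IH (ltnW hj))).
- by apply/composite_shift; apply: prism_composite.
Qed.

Lemma composite_of_prism : composite x n.-1 eps a a'.
Proof.
rewrite -prism_first -prism_last; apply/composite_shift; rewrite prednK //.
exact: prism_chain.
Qed.
End HomotopyToComposite.

Lemma composite_of_shtpy (X : strat) (x : X 0) n (a a' : X n) :
  0 < n -> weak_complicial X -> bdry_const a x -> bdry_const a' x ->
  shtpy a a' -> composite x n.-1 (cst n x) a a'.
Proof. by move=> hn wc ba ba' [H [H0 [H1 Hb]]]; apply: composite_of_prism H0 H1 Hb. Qed.

Section PrismCollapse.
Variable n : nat.

Definition prism_collapse_fun m (f : Dmap m n) (t : Dmap m 1) (p : 'I_m.+1) : 'I_n.+2 :=
  inord (dfun f p + ((nat_of_ord (dfun t p) == 1) && (nat_of_ord (dfun f p) == n))).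

Lemma prism_collapse_fun_val m f t p : nat_of_ord (@prism_collapse_fun m f t p) =
  dfun f p + ((nat_of_ord (dfun t p) == 1) && (nat_of_ord (dfun f p) == n)).
Proof. by rewrite /prism_collapse_fun inordK //; have := ltn_ord (dfun f p); lia. Qed.

Lemma prism_collapse_fun_mono m f t : {homo @prism_collapse_fun m f t : p q / p <= q}.
Proof.
move=> p q h; have h1 := dfun_mono f h; have h2 := dfun_mono t h.
have := ltn_ord (dfun f q); have := ltn_ord (dfun t q).
by rewrite !prism_collapse_fun_val; lia.
Qed.

Definition prism_collapse m f t : Dmap m n.+1 := dmap_of (@prism_collapse_fun_mono m f t).

Lemma prism_collapse_val m f t p : nat_of_ord (dfun (@prism_collapse m f t) p) =
  dfun f p + ((nat_of_ord (dfun t p) == 1) && (nat_of_ord (dfun f p) == n)).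
Proof. by rewrite dmap_ofE prism_collapse_fun_val. Qed.

Lemma prism_collapse_comp l m f t (g : Dmap l m) :
  prism_collapse (dcomp f g) (dcomp t g) = dcomp (@prism_collapse m f t) g.
Proof. by apply: dmap_ext => p; rewrite dcompE !prism_collapse_val !dcompE. Qed.
End PrismCollapse.

Section CompositeToHomotopy.
Variables (X : strat) (x : X 0) (n : nat) (v u : X n) (psi : X n.+1).
Hypotheses (hn : 0 < n)
  (hpsi : thin_faces psi (band_faces x n.-1 (nth (cst n x) [:: cst n x; u; v]))).

Lemma prism_collapse_thin m (ft : sprod (DeltaS n) (DeltaT 0) m) :
  thin ft -> thin (sact (prism_collapse ft.1 ft.2) psi).
Proof.
case: ft => f t [tf _] /=.
have [s [s' [hs ef]]] : exists s s' : 'I_m.+1, s < s' /\ dfun f s = dfun f s'.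
  case: tf => [[m' [h [z [hm /= ->]]]] | []].
  by have [s [s' [hs e]]] := dmap_degen_noninj h hm; exists s, s'; rewrite !dcompE e.
case: (dinj_or_collapse (prism_collapse f t)) => [inj | [r [r' [hr er]]]]; last first.
  exact: sact_noninj_thin hr er.
have hne : nat_of_ord (dfun (prism_collapse f t) s) <> dfun (prism_collapse f t) s'.
  by move=> /ord_inj /inj e; move: hs; rewrite e ltnn.
have ht := dfun_mono t (ltnW hs).
have := ltn_ord (dfun t s'); have := ltn_ord (dfun f s').
move: hne; rewrite !prism_collapse_val ef => hne h1 h2.
(* so [f s = f s' = n] while [t] jumps from 0 to 1: the collapse hits both [n] and [n+1] *)
have [_ fpsi] := hpsi.
apply: (sact_thin_covering (P := fun p : 'I_n.+2 => (p == n :> nat) || (p == n.+1 :> nat))).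
- by case: hpsi.
- by have := ltn_ord s'; lia.
- by move=> p /negP hp; rewrite fpsi band_faces3E; nat_cases.
- by move=> p /orP [] /eqP hp; [exists s | exists s']; apply: ord_inj;
    rewrite prism_collapse_val ?ef hp; lia.
Qed.

Definition collapse_htpy : smap (sprod (DeltaS n) (DeltaT 0)) X.
Proof.
refine (@SMap (sprod (DeltaS n) (DeltaT 0)) X (fun m ft => sact (prism_collapse ft.1 ft.2) psi)
  _ prism_collapse_thin).
by move=> m m' g [f t] /=; rewrite prism_collapse_comp sact_comp.
Defined.

Lemma shtpy_of_thin_faces : shtpy v u.
Proof.
have [_ fpsi] := hpsi.
have ebot m (f : Dmap m n) : sact (prism_collapse f (dconst m ord0)) psi = sact f v.
  have -> : prism_collapse f (dconst m ord0) = dcomp (dface ord_max) f.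
    apply: dmap_ext => p; rewrite prism_collapse_val dconstE dcompE dfaceE /=.
    by have := ltn_ord (dfun f p); rewrite /bump; lia.
  by rewrite sact_comp fpsi band_faces3E /=; nat_cases.
exists collapse_htpy; split; [exact: ebot | split].
  move=> m f /=.
  have -> : prism_collapse f (dconst m ord_max) = dcomp (dface (inord n)) f.
    apply: dmap_ext => p; rewrite prism_collapse_val dconstE dcompE dfaceE /= inordK //.
    by have := ltn_ord (dfun f p); rewrite /bump; lia.
  by rewrite sact_comp fpsi band_faces3E inordK //; nat_cases.
move=> m f t /dsurjPn [c hc] /=; rewrite -ebot.
have fc p : nat_of_ord (dfun f p) <> c by move=> e; apply: (hc p); apply: ord_inj.
case: (eqVneq (nat_of_ord c) n) => hcn.
  congr (sact _ psi); apply: dmap_ext => p; rewrite !prism_collapse_val dconstE.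
  by have := fc p; lia.
have hcn' : nat_of_ord c < n by have := ltn_ord c; lia.
have mc t' : misses (prism_collapse f t') (inord c).
  move=> p /(congr1 (@nat_of_ord _)); rewrite /= prism_collapse_val inordK; last lia.
  by have := fc p; have := ltn_ord (dfun f p); lia.
have Fc : band_faces x n.-1 (nth (cst n x) [:: cst n x; u; v]) (inord c : 'I_n.+2) = cst n x.
  by rewrite band_faces3E inordK; [nat_cases | lia].
by rewrite (sact_misses_cst_face hpsi (mc t) Fc) (sact_misses_cst_face hpsi (mc _) Fc).
Qed.
End CompositeToHomotopy.

Lemma shtpy_of_composite (X : strat) (x : X 0) n (v u : X n) :
  0 < n -> composite x n.-1 (cst n x) v u -> shtpy v u.
Proof. by move=> hn [psi hpsi]; apply: shtpy_of_thin_faces hpsi. Qed.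

Lemma horn_composite (X : strat) (x : X 0) n (th : smap (DeltaK (inord n)) X) (a b : X n) :
  0 < n -> th n (dface (inord n.-1)) = a -> th n (dface ord_max) = b ->
  (forall i : 'I_n.+2, i < n.-1 -> th n (dface i) = cst n x) ->
  composite x n.-1 a b (th n (dface (inord n))).
Proof.
move=> hn ha hb hi; exists (th n.+1 (did n.+1)); split.
  by apply: smf_thin; right => j _; exists j; apply: didE.
move=> p; rewrite -smf_nat /= dcomp_idl band_faces3E.
case: (ltnP p n.-1) => h; first by rewrite hi //; nat_cases.
have [e|[e|e]] : nat_of_ord p = n.-1 \/ nat_of_ord p = n \/ nat_of_ord p = n.+1.
  by have := ltn_ord p; lia.
- have -> : p = inord n.-1 by apply: ord_inj; rewrite inordK; lia.
  by rewrite ha inordK; [nat_cases | lia].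
- have -> : p = inord n by apply: ord_inj; rewrite inordK; lia.
  by rewrite inordK; [nat_cases | lia].
- have -> : p = ord_max by apply: ord_inj.
  by rewrite hb /=; nat_cases.
Qed.

Theorem mainTheorem3 (X : strat) (x : X 0) (n : nat) (hn : 1 <= n)
  (a a' b b' : X n) (th th' : smap (@DeltaK n (inord n)) X) :
  weak_complicial X ->
  bdry_const a x -> bdry_const a' x -> bdry_const b x -> bdry_const b' x ->
  shtpy a a' -> shtpy b b' ->
  th n (dface (inord n.-1)) = a -> th n (dface ord_max) = b ->
  (forall i : 'I_n.+2, i < n.-1 -> th n (dface i) = cst n x) ->
  th' n (dface (inord n.-1)) = a' -> th' n (dface ord_max) = b' ->
  (forall i : 'I_n.+2, i < n.-1 -> th' n (dface i) = cst n x) ->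
  shtpy (th n (dface (inord n))) (th' n (dface (inord n))).
Proof.
move=> wc ba ba' bb bb' hA hB ha hb hi ha' hb' hi'.
have hj : n.-1 < n by lia.
have Ca := composite_of_shtpy hn wc ba ba' hA.
have Cb := composite_of_shtpy hn wc bb bb' hB.
have Cth := horn_composite hn ha hb hi.
have Cth' := horn_composite hn ha' hb' hi'.
apply: (shtpy_of_composite hn); apply: (composite_horn1 wc hj Ca _ Cth).
exact: (composite_horn2 wc hj (composite_degen_l hj ba') Cth' Cb).
Qed.
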